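(* Let $\mathbf{X},\mathbf{Y},\mathbf{Z}$ be finite non-empty sets and let $P$ be a positive probability measure on $\mathbf{X}\times\mathbf{Y}\times\mathbf{Z}$. Let $(X_n,Y_n,Z_n)$, $n=1,\dots,N$, be independent random elements of $\mathbf{X}\times\mathbf{Y}\times\mathbf{Z}$, each distributed according to $P$, with $N\ge1$ fixed. Fix $\delta>0$, $\tilde x\in\mathbf{X}$ and $y\in\mathbf{Y}$, and define the parameter \[ P(y\mid\mathrm{do}(\tilde x)):=\sum_{z\in\mathbf{Z}}P(Z=z\mid X=\tilde x)\sum_{x\in\mathbf{X}}P(Y=y\mid X=x,Z=z)\,P(X=x). \] Let $K:=|\mathbf{X}||\mathbf{Z}|+|\mathbf{X}|+|\mathbf{Z}|$, \[ m:=\sum_{z\in\mathbf{Z}}\hat p(z\mid\tilde x)\sum_{x\in\mathbf{X}}\hat p(y\mid x,z)\,\hat p(x), \] \[ h:=|\mathbf{X}||\mathbf{Z}|\sqrt{\frac{\ln\frac{2K}{\delta}}{2N}}+|\mathbf{X}||\mathbf{Z}|\sqrt{\frac{\ln\frac{2K}{\delta}}{2\,\#\tilde x}}+\sum_{x\in\mathbf{X},z\in\mathbf{Z}}\sqrt{\frac{\ln\frac{2K}{\delta}}{2\,\#xz}}, \] with $h:=\infty$ if any of the counts in the denominators is $0$. Then $\mathbb{P}\bigl(P(y\mid\mathrm{do}(\tilde x))\in[m-h,m+h]\bigr)\ge1-\delta$.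
   Context: Counting notation: $\#x:=|\{n\in[N]:X_n=x\}|$, $\#xz:=|\{n\in[N]:(X_n,Z_n)=(x,z)\}|$, $\#xyz:=|\{n\in[N]:(X_n,Y_n,Z_n)=(x,y,z)\}|$. Estimates: $\hat p(x):=\#x/N$, $\hat p(z\mid\tilde x):=\#\tilde x z/\#\tilde x$, $\hat p(y\mid x,z):=\#xyz/\#xz$. The parameter is the causal effect of $X$ on $Y$ when a set of variables $Z$ of a causal dag satisfies Pearl's front-door criterion relative to $(X,Y)$ ($Z$ may be a tuple of variables, $\mathbf{Z}$ the product of their domains); the claim concerns only the displayed quantity. *)

From HB Require Import structures.
From mathcomp Require Import all_boot all_order all_algebra.
From mathcomp Require Import reals exp.
Set Implicit Arguments. Unset Strict Implicit. Unset Printing Implicit Defensive.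
Import Order.TTheory GRing.Theory Num.Theory.
Local Open Scope ring_scope.

Section FrontDoor.
Variables (R : realType) (X Y Z : finType).

Definition positive_prob (P : X * Y * Z -> R) : Prop :=
  (forall t, 0 < P t) /\ \sum_t P t = 1.

Definition PX (P : X * Y * Z -> R) (x : X) : R :=
  \sum_(t | t.1.1 == x) P t.
Definition PXZ (P : X * Y * Z -> R) (x : X) (z : Z) : R :=
  \sum_(t | (t.1.1 == x) && (t.2 == z)) P t.
Definition PZ_given_X (P : X * Y * Z -> R) (z : Z) (x : X) : R :=
  PXZ P x z / PX P x.
Definition PY_given_XZ (P : X * Y * Z -> R) (y : Y) (x : X) (z : Z) : R :=
  P (x, y, z) / PXZ P x z.

Definition front_door (P : X * Y * Z -> R) (xt : X) (y : Y) : R :=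
  \sum_(z : Z) PZ_given_X P z xt *
    \sum_(x : X) PY_given_XZ P y x z * PX P x.

Variable N : nat.
Definition sample := {ffun 'I_N -> X * Y * Z}.

Definition sample_prob (P : X * Y * Z -> R) (s : sample) : R :=
  \prod_(n < N) P (s n).
Definition Prob (P : X * Y * Z -> R) (E : pred sample) : R :=
  \sum_(s | E s) sample_prob P s.

Definition cnt_x (s : sample) (x : X) : nat := #|[set n | (s n).1.1 == x]|.
Definition cnt_xz (s : sample) (x : X) (z : Z) : nat :=
  #|[set n | ((s n).1.1 == x) && ((s n).2 == z)]|.
Definition cnt_xyz (s : sample) (x : X) (y : Y) (z : Z) : nat :=
  #|[set n | s n == (x, y, z)]|.

Definition hp_x (s : sample) (x : X) : R := (cnt_x s x)%:R / N%:R.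
Definition hp_z_given_x (s : sample) (z : Z) (x : X) : R :=
  (cnt_xz s x z)%:R / (cnt_x s x)%:R.
Definition hp_y_given_xz (s : sample) (y : Y) (x : X) (z : Z) : R :=
  (cnt_xyz s x y z)%:R / (cnt_xz s x z)%:R.

Definition m_est (s : sample) (xt : X) (y : Y) : R :=
  \sum_(z : Z) hp_z_given_x s z xt *
    \sum_(x : X) hp_y_given_xz s y x z * hp_x s x.

Definition Kconst : nat := #|X| * #|Z| + #|X| + #|Z|.

(* finite half-width h (only meaningful when all counts are positive) *)
Definition h_width (delta : R) (s : sample) (xt : X) : R :=
  let L := ln (2 * Kconst%:R / delta) in
  (#|X| * #|Z|)%:R * Num.sqrt (L / (2 * N%:R))
  + (#|X| * #|Z|)%:R * Num.sqrt (L / (2 * (cnt_x s xt)%:R))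
  + \sum_(x : X) \sum_(z : Z) Num.sqrt (L / (2 * (cnt_xz s x z)%:R)).

(* h = +oo iff some count in a denominator is 0 (N >= 1 is assumed) *)
Definition h_infinite (s : sample) (xt : X) : bool :=
  (cnt_x s xt == 0)%N || [exists x, exists z, cnt_xz s x z == 0%N].

Definition covers (P : X * Y * Z -> R) (delta : R) (xt : X) (y : Y)
    (s : sample) : bool :=
  h_infinite s xt ||
  ((m_est s xt y - h_width delta s xt <= front_door P xt y)
   && (front_door P xt y <= m_est s xt y + h_width delta s xt)).

End FrontDoor.

From HB Require Import structures.
From mathcomp Require Import all_boot all_order all_algebra.
From mathcomp Require Import reals exp sequences functions topology normedtype derive realfun.
From mathcomp Require Import ring lra zify.
Set Implicit Arguments. Unset Strict Implicit. Unset Printing Implicit Defensive.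
Import Order.TTheory GRing.Theory Num.Theory numFieldNormedType.Exports.
Local Open Scope ring_scope.

(* Every factor of the plug-in estimate [m] is an empirical conditional
   frequency #(g and f) / #g.  Given which sample indices fall in [g], the hits
   of [f] among them are i.i.d. Bernoulli with the true conditional probability,
   so a Chernoff bound with Hoeffding's lemma shows that the frequency deviates
   by more than sqrt (L / (2 #g)) with probability at most 2 e^-L.  With
   L = ln (2K / delta), a union bound over the K frequencies leaves failure
   probability at most delta, and outside the failure event the deviations of
   the factors, all in [0, 1], add up to at most [h] in the front-door formula. *)

Section BernoulliMGF.
Variable R : realType.

Lemma ler_is_derive_ge0 (f df : R -> R) (a x : R) :
  (forall y : R, is_derive y 1 f (df y)) -> (forall y, a <= y -> 0 <= df y) ->
  a <= x -> f a <= f x.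
Proof.
move=> fd df0 ax.
have [|c cax E] := @MVT_segment R f df a x ax.
  apply/continuous_subspaceT => r.
  by apply/differentiable_continuous/derivable1_diffP; have [] := fd r.
rewrite -subr_ge0 E mulr_ge0 ?subr_ge0 // df0 //.
by move: cax; rewrite in_itv /= => /andP[].
Qed.

Lemma pade_expR_le (x : R) : 0 <= x -> (2 - x) * expR x <= 2 + x.
Proof.
move=> x0.
pose f : R -> R := (cst 2 + id) - (cst 2 - id) * expR.
have : f 0 <= f x.
  apply: (@ler_is_derive_ge0 f (fun t => 1 - (1 - t) * expR t)) => // [t|t _].
    by apply: is_derive_eq; rewrite !fctE /cst /= /GRing.scale /=; ring.
  rewrite subr_ge0 -(ler_pM2r (expR_gt0 (- t))) mul1r -mulrA -expRD addrN.
  by rewrite expR0 mulr1 expR_ge1Dx.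
by rewrite /f !fctE /cst /= expR0; lra.
Qed.

Lemma expR_sub1_pade_le (l : R) : 0 <= l < 4 -> (expR l - 1) * (4 - l) ^+ 2 <= 16 * l.
Proof.
move=> /andP[l0 l4].
have h := pade_expR_le (divr_ge0 l0 (ler0n _ 2)).
have el : expR l = expR (l / 2) ^+ 2 by rewrite -expRM_natl; congr expR; field.
have e0 := expR_gt0 (l / 2).
have h2 : ((4 - l) * expR (l / 2)) ^+ 2 <= (4 + l) ^+ 2.
  by rewrite ler_sqr ?nnegrE; nra.
rewrite el; nra.
Qed.

(* With [psi l = ln (q e^l + 1 - q)] the cumulant generating function of a
   Bernoulli(q) variable, this is [psi' l - q <= l / 4] cleared of denominators. *)
Lemma bernoulli_cgf_slope_le (q l : R) : 0 <= q <= 1 -> 0 <= l ->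
  4 * q * (1 - q) * (expR l - 1) <= l * (q * expR l + 1 - q).
Proof.
move=> /andP[q0 q1] l0.
have e1 : 1 <= expR l by rewrite -expR0 ler_expR.
have [l4|l4] := leP 4 l.
  have : 0 <= l * (1 - q) by rewrite mulr_ge0 // subr_ge0.
  have : 4 * (q * expR l) <= l * (q * expR l) by rewrite ler_wpM2r ?mulr_ge0 ?expR_ge0.
  nra.
set a := expR l - 1.
have a0 : 0 <= a by rewrite subr_ge0.
have ha : a * (4 - l) ^+ 2 <= 16 * l by apply: expR_sub1_pade_le; rewrite l0.
have -> : expR l = a + 1 by rewrite subrK.
have [->|ap] := eqVneq a 0; first nra.
have {}ap : 0 < a by rewrite lt_def ap a0.
have sos : 16 * a * (l * (1 + q * a) - 4 * q * (1 - q) * a) =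
  (8 * q * a - a * (4 - l)) ^+ 2 + a * (16 * l - a * (4 - l) ^+ 2) by ring.
have : 0 <= 16 * a * (l * (1 + q * a) - 4 * q * (1 - q) * a).
  by rewrite sos addr_ge0 ?sqr_ge0 // mulr_ge0 // subr_ge0.
rewrite pmulr_rge0 ?mulr_gt0 //; nra.
Qed.

Lemma hoeffding_bernoulli_ge0 (q l : R) : 0 <= q <= 1 -> 0 <= l ->
  q * expR (l * (1 - q)) + (1 - q) * expR (- (l * q)) <= expR (l ^+ 2 / 8).
Proof.
move=> q01 l0.
(* [(q e^l + 1 - q) e^(- q l - l^2 / 8)] is nonincreasing: its logarithmic
   derivative is [psi' l - q - l / 4 <= 0]. *)
pose h : R -> R := - (cst q * id + id ^+ 2 * cst (8^-1)).
pose g : R -> R := - ((cst q * expR + cst (1 - q)) * (expR \o h)).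
have : g 0 <= g l.
  apply: (@ler_is_derive_ge0 g (fun t => - expR (h t) *
      (q * expR t - (q + t / 4) * (q * expR t + 1 - q)))) => // [t|c c0].
    by apply: is_derive_eq; rewrite /h !fctE /cst /= /GRing.scale /=; field.
  have hX : q * expR c - (q + c / 4) * (q * expR c + 1 - q) <= 0.
    have -> : q * expR c - (q + c / 4) * (q * expR c + 1 - q) =
      (4 * q * (1 - q) * (expR c - 1) - c * (q * expR c + 1 - q)) / 4 by field.
    by rewrite pmulr_lle0 ?invr_gt0 // subr_le0 bernoulli_cgf_slope_le.
  by rewrite mulNr oppr_ge0 pmulr_rle0 ?expR_gt0.
rewrite /g /h !fctE /cst /= expr0n /= mulr0 mul0r addr0 oppr0 expR0 mulr1.
rewrite lerN2 mulr1 [q + _]addrC subrK => H.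
have -> : expR (l * (1 - q)) = expR l * expR (- (l * q)) by rewrite -expRD; congr expR; ring.
have -> : expR (- (l * q)) = expR (- (q * l + l ^+ 2 / 8)) * expR (l ^+ 2 / 8).
  by rewrite -expRD; congr expR; ring.
have -> : q * (expR l * (expR (- (q * l + l ^+ 2 / 8)) * expR (l ^+ 2 / 8))) +
  (1 - q) * (expR (- (q * l + l ^+ 2 / 8)) * expR (l ^+ 2 / 8)) =
  ((q * expR l + (1 - q)) * expR (- (q * l + l ^+ 2 / 8))) * expR (l ^+ 2 / 8) by ring.
by rewrite -[X in _ <= X]mul1r ler_wpM2r ?expR_ge0.
Qed.

Lemma hoeffding_bernoulli (q l : R) : 0 <= q <= 1 ->
  q * expR (l * (1 - q)) + (1 - q) * expR (- (l * q)) <= expR (l ^+ 2 / 8).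
Proof.
move=> q01; have [l0|/ltW l0] := leP 0 l; first exact: hoeffding_bernoulli_ge0.
have q01' : 0 <= 1 - q <= 1 by move: q01 => /andP[? ?]; apply/andP; split; lra.
have := hoeffding_bernoulli_ge0 q01' (_ : 0 <= - l); rewrite oppr_ge0 sqrrN => /(_ l0).
have -> : - l * (1 - (1 - q)) = - (l * q) by ring.
have -> : - (- l * (1 - q)) = l * (1 - q) by ring.
have -> : 1 - (1 - q) = q by ring.
by rewrite addrC.
Qed.

Lemma expR_tail_ge1 (l a D : R) : 0 <= l -> a < `|D| ->
  1 <= (expR (l * D) + expR (- l * D)) * expR (- (l * a)).
Proof.
move=> l0 aD.
have eD : expR (l * `|D|) <= expR (l * D) + expR (- l * D).
  have [D0|D0] := leP 0 D; first by rewrite ger0_norm // lerDl expR_ge0.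
  by rewrite ltr0_norm // mulrN -mulNr lerDr expR_ge0.
apply: le_trans (ler_wpM2r (expR_ge0 _) eD).
by rewrite -expRD -mulrN -mulrDr -expR0 ler_expR mulr_ge0 // subr_ge0 ltW.
Qed.

End BernoulliMGF.

Lemma divr_ge0_le1 (R : numFieldType) (a b : R) : 0 <= a <= b -> 0 <= a / b <= 1.
Proof.
move=> /andP[a0 ab]; rewrite divr_ge0 ?(le_trans a0) //=.
have [->|b0] := eqVneq b 0; first by rewrite invr0 mulr0.
by rewrite ler_pdivrMr ?mul1r // lt_def b0 (le_trans a0).
Qed.

Section SampleLaw.
Variables (R : realType) (X Y Z : finType) (N : nat) (P : X * Y * Z -> R).
Hypothesis P0 : forall t, 0 <= P t.
Hypothesis P1 : \sum_t P t = 1.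
Local Notation T := (X * Y * Z)%type.
Local Notation S := (sample X Y Z N).
Local Notation mu := (sample_prob (N:=N) P).

Lemma sample_prob_ge0 (s : S) : 0 <= mu s.
Proof. exact: prodr_ge0. Qed.

Lemma sum_sample_prob : \sum_(s : S) mu s = 1.
Proof.
rewrite /sample_prob -(bigA_distr_bigA (fun (n : 'I_N) (t : T) => P t)) /=.
by rewrite big1 // => n _; rewrite P1.
Qed.

Definition sample_hits (s : S) (g : pred T) : {set 'I_N} := [set n | g (s n)].

Lemma sum_sample_prob_hits (A : {set 'I_N}) (g : pred T) (w : T -> R) :
  \sum_(s : S | sample_hits s g == A) mu s * \prod_(n in A) w (s n)
  = (\sum_(t | g t) P t * w t) ^+ #|A| * (\sum_(t | ~~ g t) P t) ^+ (N - #|A|).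
Proof.
pose phi n t := if n \in A then (g t)%:R * (P t * w t) else (~~ g t)%:R * P t.
have phiE s : (if sample_hits s g == A then mu s * \prod_(n in A) w (s n) else 0)
              = \prod_n phi n (s n).
  have [hs|hs] := eqVneq (sample_hits s g) A.
    have gE n : g (s n) = (n \in A) by rewrite -hs inE.
    rewrite /sample_prob (big_mkcond (mem A)) -big_split /=.
    by apply: eq_bigr => n _; rewrite /phi gE; case: (n \in A); rewrite /= ?mul1r ?mulr1.
  have [n gn] : exists n, g (s n) != (n \in A).
    apply/existsP; apply: contraNT hs => /existsPn gA.
    by apply/eqP/setP => n; rewrite inE; apply/eqP/negbNE/gA.
  by rewrite (bigD1 n) //= /phi; move: gn; case: (g _); case: (n \in A); rewrite ?mul0r.
rewrite big_mkcond /= (eq_bigr _ (fun s _ => phiE s)) -(bigA_distr_bigA phi) /=.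
rewrite (bigID (mem A)) /=.
rewrite (eq_bigr (fun=> \sum_(t | g t) P t * w t)) => [|n nA]; last first.
  by rewrite /phi nA [RHS]big_mkcond; apply: eq_bigr => t _; case: (g t); rewrite ?mul1r ?mul0r.
rewrite [X in _ * X](eq_bigr (fun=> \sum_(t | ~~ g t) P t)) => [|n /negbTE nA]; last first.
  by rewrite /phi nA [RHS]big_mkcond; apply: eq_bigr => t _; case: (g t); rewrite ?mul1r ?mul0r.
rewrite !prodr_const; congr (_ ^+ _ * _ ^+ _).
have NA : (N - #|A|)%N = #|~: A|.
  by have := cardsC A; rewrite card_ord; move: #|~: A| #|A| => a b <-; rewrite addKn.
by rewrite NA; apply: eq_card => n; rewrite !inE.
Qed.

Definition cond_prob (g f : pred T) : R :=
  (\sum_(t | g t && f t) P t) / \sum_(t | g t) P t.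

Definition cond_freq (s : S) (g f : pred T) : R :=
  #|sample_hits s (fun t => g t && f t)|%:R / #|sample_hits s g|%:R.

Definition cond_excess (s : S) (g f : pred T) : R :=
  #|sample_hits s (fun t => g t && f t)|%:R - #|sample_hits s g|%:R * cond_prob g f.

Definition deviates (g f : pred T) (L : R) (s : S) : bool :=
  let k := #|sample_hits s g| in
  (0 < k)%N && (Num.sqrt (L / (2 * k%:R)) < `|cond_freq s g f - cond_prob g f|).

Lemma cond_prob_ge0_le1 (g f : pred T) : 0 <= cond_prob g f <= 1.
Proof.
apply: divr_ge0_le1; rewrite sumr_ge0 //= [X in _ <= X](bigID f) /=.
by rewrite lerDl sumr_ge0.
Qed.

Lemma cond_freq_ge0_le1 (s : S) (g f : pred T) : 0 <= cond_freq s g f <= 1.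
Proof.
apply: divr_ge0_le1; rewrite ler0n ler_nat subset_leq_card //.
by apply/subsetP => n; rewrite !inE => /andP[].
Qed.

Lemma cond_mgf_le (g f : pred T) (c : R) : 0 < \sum_(t | g t) P t ->
  \sum_(t | g t) P t * expR (c * ((f t)%:R - cond_prob g f))
  <= (\sum_(t | g t) P t) * expR (c ^+ 2 / 8).
Proof.
move=> pg0; set pg := \sum_(t | g t) P t in pg0 *; set q := cond_prob g f.
have pg_f : \sum_(t | g t && f t) P t = pg * q by rewrite mulrC divfK ?gt_eqF.
have pg_nf : \sum_(t | g t && ~~ f t) P t = pg * (1 - q).
  have : pg = \sum_(t | g t && f t) P t + \sum_(t | g t && ~~ f t) P t by rewrite /pg (bigID f).
  rewrite pg_f mulrBr mulr1; lra.
rewrite (bigID f) /= (eq_bigr (fun t => P t * expR (c * (1 - q)))) => [|t /andP[_ ->]] //.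
rewrite [X in _ + X](eq_bigr (fun t => P t * expR (- (c * q)))) => [|t /andP[_ /negbTE ->]];
  last by rewrite sub0r mulrN.
rewrite -!big_distrl /= pg_f pg_nf.
have -> : pg * q * expR (c * (1 - q)) + pg * (1 - q) * expR (- (c * q)) =
  pg * (q * expR (c * (1 - q)) + (1 - q) * expR (- (c * q))) by ring.
by rewrite ler_pM2l // hoeffding_bernoulli // cond_prob_ge0_le1.
Qed.

Lemma deviates_expR_ge1 (g f : pred T) (L l : R) (s : S) : 0 <= l -> deviates g f L s ->
  1 <= (expR (l * cond_excess s g f) + expR (- l * cond_excess s g f)) *
       expR (- (l * (#|sample_hits s g|%:R * Num.sqrt (L / (2 * #|sample_hits s g|%:R))))).
Proof.
move=> l0 /andP[k0 dev]; apply: expR_tail_ge1 => //.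
have -> : cond_excess s g f = (cond_freq s g f - cond_prob g f) * #|sample_hits s g|%:R.
  by rewrite /cond_excess /cond_freq; field; rewrite pnatr_eq0 -lt0n.
by rewrite normrM normr_nat mulrC ltr_pM2r ?ltr0n.
Qed.

Lemma sum_sample_prob_excess (A : {set 'I_N}) (g f : pred T) (c : R) :
  \sum_(s : S | sample_hits s g == A) mu s * expR (c * cond_excess s g f)
  = (\sum_(t | g t) P t * expR (c * ((f t)%:R - cond_prob g f))) ^+ #|A|
    * (\sum_(t | ~~ g t) P t) ^+ (N - #|A|).
Proof.
rewrite -sum_sample_prob_hits; apply: eq_bigr => s /eqP hs; congr (_ * _).
rewrite -expR_sum; congr expR.
rewrite -mulr_sumr sumrB sumr_const /cond_excess hs mulr_natl; congr (c * (_ - _)).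
rewrite -natr_sum -sum1_card; congr _%:R.
rewrite (eq_bigl (fun n => (n \in A) && f (s n))) => [|n]; last by rewrite -hs !inE.
by rewrite big_mkcondr; apply: eq_bigr => n _; case: (f _).
Qed.

Lemma sum_deviates_hits_le (g f : pred T) (L : R) (A : {set 'I_N}) :
  0 <= L -> 0 < \sum_(t | g t) P t ->
  \sum_(s : S | deviates g f L s && (sample_hits s g == A)) mu s
  <= 2 * expR (- L) * \sum_(s : S | sample_hits s g == A) mu s.
Proof.
move=> L0 pg0.
have [k0|kpos] := posnP #|A|.
  rewrite big1 => [|s /andP[+ /eqP hs]]; last by rewrite /deviates hs k0.
  by rewrite !mulr_ge0 ?expR_ge0 ?sumr_ge0 // => s _; apply: sample_prob_ge0.
set k := #|A| in kpos *; set t := Num.sqrt (L / (2 * k%:R)).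
(* The Chernoff exponent [k l^2 / 8 - l k t] is minimal at [l = 4 t], where it
   equals [- 2 k t^2 = - L]. *)
set l := 4 * t.
have l0 : 0 <= l by rewrite mulr_ge0 ?sqrtr_ge0.
pose M c := \sum_(s : S | sample_hits s g == A) mu s * expR (c * cond_excess s g f).
apply: le_trans (_ : _ <= (M l + M (- l)) * expR (- (l * (k%:R * t)))) _.
  rewrite /M -big_split big_distrl big_mkcondl /=; apply: ler_sum => s /eqP hs.
  have mu0 := sample_prob_ge0 s.
  case: ifP => [dev|_]; last by rewrite !mulr_ge0 ?addr_ge0 ?mulr_ge0 ?expR_ge0.
  rewrite -mulrDr -mulrA ler_peMr //.
  by have := deviates_expR_ge1 l0 dev; rewrite hs.
pose B := \sum_(t | ~~ g t) P t; pose pg := \sum_(t | g t) P t.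
have mgf_le c : M c <= (pg * expR (c ^+ 2 / 8)) ^+ k * B ^+ (N - k).
  rewrite /M sum_sample_prob_excess ler_wpM2r ?exprn_ge0 ?sumr_ge0 //.
  rewrite lerXn2r ?nnegrE ?cond_mgf_le ?mulr_ge0 ?expR_ge0 ?sumr_ge0 // => u _.
  by rewrite mulr_ge0 ?expR_ge0.
have mass : \sum_(s : S | sample_hits s g == A) mu s = pg ^+ k * B ^+ (N - k).
  have := sum_sample_prob_hits A g (fun=> 1).
  rewrite (eq_bigr (fun u => P u)) => [<-|u _]; last by rewrite mulr1.
  by apply: eq_bigr => s _; rewrite big1_eq mulr1.
have t2E : t ^+ 2 = L / (2 * k%:R) by rewrite sqr_sqrtr // divr_ge0 ?mulr_ge0.
have exponentE : expR (l ^+ 2 / 8) ^+ k * expR (- (l * (k%:R * t))) = expR (- L).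
  rewrite -expRM_natl -expRD; congr expR.
  have -> : k%:R * (l ^+ 2 / 8) - l * (k%:R * t) = - (2 * k%:R * t ^+ 2) by rewrite /l; field.
  by rewrite t2E; field; rewrite pnatr_eq0 -lt0n.
apply: le_trans (ler_wpM2r (expR_ge0 _) (lerD (mgf_le l) (mgf_le (- l)))) _.
rewrite sqrrN mass -exponentE exprMn le_eqVlt; apply/orP; left; apply/eqP; ring.
Qed.

Lemma Prob_deviates_le (g f : pred T) (L : R) : 0 <= L -> 0 < \sum_(t | g t) P t ->
  Prob P (deviates g f L) <= 2 * expR (- L).
Proof.
move=> L0 pg0; rewrite /Prob (partition_big (sample_hits ^~ g) predT) //=.
apply: le_trans (ler_sum _ (fun A _ => sum_deviates_hits_le f A L0 pg0)) _.
rewrite -mulr_sumr -[X in _ <= X]mulr1 -sum_sample_prob.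
by rewrite (partition_big (sample_hits ^~ g) predT).
Qed.

Lemma Prob_ge0 (E : pred S) : 0 <= Prob P E.
Proof. by apply: sumr_ge0 => s _; apply: sample_prob_ge0. Qed.

Lemma ProbC (E : pred S) : Prob P E = 1 - Prob P (fun s => ~~ E s).
Proof. by rewrite -sum_sample_prob (bigID E) /= addrK. Qed.

Lemma Prob_union_bound (I : finType) (E : pred S) (F : I -> pred S) :
  (forall s, E s -> [exists i, F i s]) -> Prob P E <= \sum_i Prob P (F i).
Proof.
move=> EF; have ite_ge0 (b : bool) s : 0 <= (if b then mu s else 0).
  by case: b; rewrite ?sample_prob_ge0.
rewrite /Prob big_mkcond (eq_bigr _ (fun i _ => big_mkcond (F i) mu)) exchange_big /=.
apply: ler_sum => s _; case: ifP => [/EF/existsP[i Fi]|_]; last exact: sumr_ge0.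
by rewrite (bigD1 i) //= Fi lerDl sumr_ge0.
Qed.

End SampleLaw.

Arguments cond_freq {R X Y Z N} s g f.
Arguments cond_freq_ge0_le1 {R X Y Z N} s g f.

Lemma dist_mul3_le (R : realFieldType) (a a' b b' p p' e1 e2 e3 : R) :
  `|a - a'| <= e1 -> `|b - b'| <= e2 -> `|p - p'| <= e3 ->
  0 <= a' <= 1 -> 0 <= b <= 1 -> 0 <= b' <= 1 -> 0 <= p <= 1 ->
  `|a * b * p - a' * b' * p'| <= e1 + e2 + e3.
Proof.
move=> ha hb hp /andP[a'0 a'1] /andP[b0 b1] /andP[b'0 b'1] /andP[p0 p1].
have -> : a * b * p - a' * b' * p' =
  (a - a') * (b * p) + (b - b') * (a' * p) + (p - p') * (a' * b') by ring.
have scale (u v e : R) : `|u| <= e -> 0 <= v <= 1 -> `|u * v| <= e.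
  move=> hu /andP[v0 v1]; rewrite normrM (ger0_norm v0).
  by apply: le_trans hu; rewrite ler_piMr.
apply: le_trans (ler_normD _ _) _; apply: lerD; last by apply: scale; rewrite // mulr_ge0 // mulr_ile1.
apply: le_trans (ler_normD _ _) _.
by apply: lerD; apply: scale; rewrite // mulr_ge0 // mulr_ile1.
Qed.

Lemma dist_front_door_formula_le (R : realFieldType) (X Z : finType)
    (a a' : Z -> R) (b b' : X -> Z -> R) (p p' : X -> R) (e1 e3 : R) (e2 : X -> Z -> R) :
  (forall z, `|a z - a' z| <= e1) -> (forall x z, `|b x z - b' x z| <= e2 x z) ->
  (forall x, `|p x - p' x| <= e3) ->
  (forall z, 0 <= a' z <= 1) -> (forall x z, 0 <= b x z <= 1) ->
  (forall x z, 0 <= b' x z <= 1) -> (forall x, 0 <= p x <= 1) ->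
  `|\sum_z a z * \sum_x b x z * p x - \sum_z a' z * \sum_x b' x z * p' x|
  <= (#|X| * #|Z|)%:R * e3 + (#|X| * #|Z|)%:R * e1 + \sum_x \sum_z e2 x z.
Proof.
move=> ha hb hp ha' hb0 hb' hp0.
rewrite -sumrB; apply: le_trans (ler_norm_sum _ _ _) _.
apply: le_trans (_ : _ <= \sum_z \sum_x (e1 + e2 x z + e3)) _.
  apply: ler_sum => z _; rewrite !big_distrr -sumrB /=.
  apply: le_trans (ler_norm_sum _ _ _) _; apply: ler_sum => x _.
  by rewrite !mulrA dist_mul3_le.
rewrite exchange_big /= (eq_bigr (fun x => e1 *+ #|Z| + \sum_z e2 x z + e3 *+ #|Z|));
  last by move=> x _; rewrite !big_split /= !sumr_const.
rewrite !big_split /= !sumr_const -!mulrnA !mulr_natl mulnC.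
by rewrite addrC addrA lexx.
Qed.

Lemma triple_eqE (A B C : eqType) (t : A * B * C) a b c :
  (t == (a, b, c)) = ((t.1.1 == a) && (t.2 == c)) && (t.1.2 == b).
Proof. by case: t => [[a' b'] c'] /=; rewrite !xpair_eqE andbAC. Qed.

Lemma sum_gt0_of_mem (R : numDomainType) (T : finType) (F : T -> R) (g : pred T) (t0 : T) :
  (forall t, 0 < F t) -> g t0 -> 0 < \sum_(t | g t) F t.
Proof.
move=> F0 gt0; rewrite (bigD1 t0) //= (lt_le_trans (F0 t0)) // lerDl.
by apply: sumr_ge0 => t _; apply: ltW.
Qed.

Section FrontDoorEvents.
Variables (R : realType) (X Y Z : finType) (N : nat) (P : X * Y * Z -> R).
Variables (xt : X) (y : Y).
Hypothesis P0 : forall t, 0 <= P t.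
Hypothesis P1 : \sum_t P t = 1.
Local Notation T := (X * Y * Z)%type.
Local Notation S := (sample X Y Z N).

(* The pairs (conditioning event, target event) of the [K] conditional
   frequencies the estimate [m] is built from: [(x, z)] gives [p(y | x, z)],
   [x] gives [p(x)] and [z] gives [p(z | xt)]. *)
Definition front_door_cond (i : X * Z + X + Z) : pred T * pred T :=
  match i with
  | inl (inl (x, z)) => (fun t => (t.1.1 == x) && (t.2 == z), fun t => t.1.2 == y)
  | inl (inr x) => (xpredT, fun t => t.1.1 == x)
  | inr z => (fun t => t.1.1 == xt, fun t => t.2 == z)
  end.

Lemma card_front_door_index : #|{: X * Z + X + Z}| = Kconst X Z.
Proof. by rewrite !card_sum card_prod. Qed.

Lemma card_sample_hits_xpredT (s : S) : #|sample_hits s xpredT| = N.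
Proof. by rewrite -[RHS]card_ord; apply: eq_card => n; rewrite inE. Qed.

Lemma cond_freq_x (s : S) x : cond_freq s xpredT (fun t => t.1.1 == x) = hp_x R s x.
Proof. by rewrite /cond_freq card_sample_hits_xpredT. Qed.

Lemma cond_prob_x x : cond_prob P xpredT (fun t => t.1.1 == x) = PX P x.
Proof. by rewrite /cond_prob P1 divr1. Qed.

Lemma cond_freq_xz (s : S) x z :
  cond_freq s (fun t => (t.1.1 == x) && (t.2 == z)) (fun t => t.1.2 == y)
  = hp_y_given_xz R s y x z.
Proof.
by rewrite /cond_freq; congr (_%:R / _); apply: eq_card => n; rewrite !inE triple_eqE.
Qed.

Lemma cond_prob_xz x z :
  cond_prob P (fun t => (t.1.1 == x) && (t.2 == z)) (fun t => t.1.2 == y)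
  = PY_given_XZ P y x z.
Proof.
rewrite /cond_prob (eq_bigl (pred1 (x, y, z))) ?big_pred1_eq // => t.
by rewrite /= triple_eqE.
Qed.

Lemma front_door_cond_pos i : (forall t, 0 < P t) ->
  0 < \sum_(t | (front_door_cond i).1 t) P t.
Proof.
move=> Ppos; case: i => [[[x z]|x]|z] /=.
- by apply: (sum_gt0_of_mem (t0 := (x, y, z))); rewrite //= !eqxx.
- by rewrite P1.
- by apply: (sum_gt0_of_mem (t0 := (xt, y, z))); rewrite //= !eqxx.
Qed.

Lemma covers_of_not_deviates (delta : R) (s : S) : (1 <= N)%N ->
  (forall i, ~~ deviates P (front_door_cond i).1 (front_door_cond i).2
                  (ln (2 * (Kconst X Z)%:R / delta)) s) ->
  covers P delta xt y s.
Proof.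
move=> N1 nodev; rewrite /covers; case: (boolP (h_infinite s xt)) => //= hfin.
move: hfin; rewrite /h_infinite negb_or -lt0n => /andP[cx /existsPn cxz].
have {}cxz x z : (0 < cnt_xz s x z)%N by have /existsPn/(_ z) := cxz x; rewrite lt0n.
have close i : (0 < #|sample_hits s (front_door_cond i).1|)%N ->
    `|cond_prob P (front_door_cond i).1 (front_door_cond i).2
      - cond_freq s (front_door_cond i).1 (front_door_cond i).2|
    <= Num.sqrt (ln (2 * (Kconst X Z)%:R / delta) /
                 (2 * #|sample_hits s (front_door_cond i).1|%:R)).
  by move=> k0; have := nodev i; rewrite /deviates k0 distrC leNgt.
rewrite -ler_distlC distrC /front_door /m_est /h_width.
apply: dist_front_door_formula_le => [z|x z|x|z|x z|x z|x].
- exact: (close (inr z) cx).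
- by have := close (inl (inl (x, z))) (cxz x z); rewrite /= cond_prob_xz cond_freq_xz.
- have := close (inl (inr x)).
  by rewrite /= card_sample_hits_xpredT cond_prob_x cond_freq_x => /(_ N1).
- exact: (cond_freq_ge0_le1 s (front_door_cond (inr z)).1 (front_door_cond (inr z)).2).
- by rewrite -cond_prob_xz cond_prob_ge0_le1.
- by rewrite -cond_freq_xz cond_freq_ge0_le1.
- by rewrite -cond_prob_x cond_prob_ge0_le1.
Qed.

End FrontDoorEvents.

Theorem theorem2 (R : realType) (X Y Z : finType)
    (P : X * Y * Z -> R) (N : nat) (delta : R) (xt : X) (y : Y) :
  positive_prob P -> (1 <= N)%N -> 0 < delta ->
  1 - delta <= Prob (N:=N) P (covers P delta xt y).
Proof.
move=> [Ppos P1] N1 d0; have P0 t : 0 <= P t by apply: ltW.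
have [d1|d1] := leP 1 delta; first by rewrite (le_trans _ (Prob_ge0 P0 _)) ?subr_le0.
have X0 : (0 < #|X|)%N by apply/card_gt0P; exists xt.
have K1 : 1 <= (Kconst X Z)%:R :> R by rewrite ler1n /Kconst; lia.
have K0 : 0 < (Kconst X Z)%:R :> R by apply: lt_le_trans K1.
set L := ln (2 * (Kconst X Z)%:R / delta).
have L0 : 0 <= L by rewrite ln_ge0 // ler_pdivlMr // mul1r; lra.
have eL : 2 * expR (- L) = delta / (Kconst X Z)%:R.
  by rewrite expRN lnK ?posrE ?divr_gt0 ?mulr_gt0 //; field; rewrite !gt_eqF.
have uncovered_deviates (s : sample X Y Z N) : ~~ covers P delta xt y s ->
    [exists i, deviates P (front_door_cond xt y i).1 (front_door_cond xt y i).2 L s].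
  by apply: contraR => /existsPn; apply: covers_of_not_deviates.
rewrite (ProbC P1) lerD2l lerN2.
apply: le_trans (Prob_union_bound P0 uncovered_deviates) _.
have deviation_le i : Prob (N:=N) P
    (deviates P (front_door_cond xt y i).1 (front_door_cond xt y i).2 L) <= 2 * expR (- L).
  by apply: Prob_deviates_le => //; apply: front_door_cond_pos.
apply: le_trans (ler_sum _ (fun i _ => deviation_le i)) _.
by rewrite sumr_const card_front_door_index eL -(mulr_natr (delta / _)) divfK ?gt_eqF.
Qed.
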